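(* Let $\mathcal{D}\subset\mathbb{R}^n$ be a parameter set, let $X$ and $Y$ be finite-dimensional real Hilbert spaces with norms $\|\cdot\|_X$, $\|\cdot\|_Y$, and for each $\mu\in\mathcal{D}$ let $m(\cdot,\cdot;\mu):X\times X\to\mathbb{R}$, $a(\cdot,\cdot;\mu):X\times X\to\mathbb{R}$, $b(\cdot,\cdot;\mu):X\times Y\to\mathbb{R}$ be bilinear forms such that $m(\cdot,\cdot;\mu)$ is symmetric with $m(v,v;\mu)>0$ for all $0\neq v\in X$, and \[ \gamma_m(\mu)=\sup_{u\in X}\sup_{v\in X}\frac{m(u,v;\mu)}{\|u\|_X\|v\|_X}<\infty,\quad \gamma_a(\mu)=\sup_{u\in X}\sup_{v\in X}\frac{a(u,v;\mu)}{\|u\|_X\|v\|_X}<\infty, \] \[ \alpha_a(\mu)=\inf_{v\in X}\frac{a(v,v;\mu)}{\|v\|_X^2}>0,\qquad \beta(\mu)=\inf_{q\in Y}\sup_{v\in X}\frac{b(v,q;\mu)}{\|q\|_Y\|v\|_X}>0 . \] Let $K\in\mathbb{N}$, $\Delta t>0$, $\mathbb{K}=\{1,\dots,K\}$, and for each $k\in\mathbb{K}$ and $\mu\in\mathcal{D}$ let $f^k(\cdot;\mu)\in X'$, $g^k(\cdot;\mu)\in Y'$. Let the truth solution $u^k(\mu)\in X$, $p^k(\mu)\in Y$, $k\in\mathbb{K}$, be defined by $u^0(\mu)=0$ and, for $k\in\mathbb{K}$, \[ \tfrac{1}{\Delta t}m(u^k(\mu)-u^{k-1}(\mu),v;\mu)+a(u^k(\mu),v;\mu)+b(v,p^k(\mu);\mu)=f^k(v;\mu)\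 \ \forall v\in X,\qquad b(u^k(\mu),q;\mu)=g^k(q;\mu)\ \ \forall q\in Y. \] Let $X_N\subset X$, $Y_N\subset Y$, $N\in\{1,\dots,N_{\max}\}$, be subspaces such that for every $\mu\in\mathcal{D}$ there exist $u^k_N(\mu)\in X_N$, $p^k_N(\mu)\in Y_N$, $k\in\mathbb{K}$, with $u^0_N(\mu)=0$ and, for $k\in\mathbb{K}$, \[ \tfrac{1}{\Delta t}m(u^k_N(\mu)-u^{k-1}_N(\mu),v_N;\mu)+a(u^k_N(\mu),v_N;\mu)+b(v_N,p^k_N(\mu);\mu)=f^k(v_N;\mu)\ \ \forall v_N\in X_N, \] \[ b(u^k_N(\mu),q_N;\mu)=g^k(q_N;\mu)\ \ \forall q_N\in Y_N. \] Define the residuals $r^{1,k}_N(v;\mu)=f^k(v;\mu)-\tfrac{1}{\Delta t}m(u^k_N(\mu)-u^{k-1}_N(\mu),v;\mu)-a(u^k_N(\mu),v;\mu)-b(v,p^k_N(\mu);\mu)$ for $v\in X$ and $r^{2,k}_N(q;\mu)=g^k(q;\mu)-b(u^k_N(\mu),q;\mu)$ for $q\in Y$, and the errors $e^{u,k}_N(\mu)=u^k(\mu)-u^k_N(\mu)$. Let $\mu\in\mathcal{D}$, $N\in\{1,\dots,N_{\max}\}$, $k\in\mathbb{K}$, and let $\alpha_a^{\rm LB}(\mu),\gamma_a^{\rm UB}(\mu),\beta^{\rm LB}(\mu),\gamma_m^{\rm UB}(\mu)$ be positive numbers with $\alpha_a^{\rm LB}(\mu)\le\alpha_a(\mu)$,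 $\gamma_a(\mu)\le\gamma_a^{\rm UB}(\mu)$, $\beta^{\rm LB}(\mu)\le\beta(\mu)$, $\gamma_m(\mu)\le\gamma_m^{\rm UB}(\mu)$. Define \[ \Delta^k_N(\mu)=\Bigg[\Delta t\sum_{j=1}^k\frac{\|r^{1,j}_N(\cdot;\mu)\|^2_{X'}}{\alpha_a^{\rm LB}(\mu)}+\frac{2}{\beta^{\rm LB}(\mu)}\Big(1+\frac{\gamma_a^{\rm UB}(\mu)}{\alpha_a^{\rm LB}(\mu)}\Big)\|r^{1,j}_N(\cdot;\mu)\|_{X'}\|r^{2,j}_N(\cdot;\mu)\|_{Y'} \] \[ +\Big(\frac{\gamma_m^{\rm UB}(\mu)}{\Delta t}+\frac{(\gamma_a^{\rm UB}(\mu))^2}{\alpha_a^{\rm LB}(\mu)}\Big)\frac{\|r^{2,j}_N(\cdot;\mu)\|^2_{Y'}}{(\beta^{\rm LB}(\mu))^2}\Bigg]^{1/2}. \] Then \[ \Big(\|e^{u,k}_N(\mu)\|_\mu^2+\Delta t\sum_{j=1}^k\|e^{u,j}_N(\mu)\|^2_{X,\mu}\Big)^{1/2}\le\Delta^k_N(\mu). \]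
   Context: Here $\|v\|_\mu=\sqrt{m(v,v;\mu)}$ and $\|v\|_{X,\mu}=\sqrt{a(v,v;\mu)}$ for $v\in X$; $X'$, $Y'$ are the dual spaces with dual norms $\|r\|_{X'}=\sup_{0\ne v\in X}r(v)/\|v\|_X$ and $\|r\|_{Y'}=\sup_{0\ne q\in Y}r(q)/\|q\|_Y$. In the sum defining $\Delta^k_N(\mu)$, all three terms are inside the sum over $j$ and multiplied by $\Delta t$. The form $a(\cdot,\cdot;\mu)$ need not be symmetric. *)

From HB Require Import structures.
From mathcomp Require Import all_boot all_order all_algebra.
From mathcomp Require Import all_classical all_reals.
Set Implicit Arguments. Unset Strict Implicit. Unset Printing Implicit Defensive.
Import Order.TTheory GRing.Theory Num.Theory.
Local Open Scope ring_scope.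
Local Open Scope classical_set_scope.

(* A finite-dimensional real Hilbert space is modelled as 'rV[R]_n with the
   inner product <u,v>_G = u G v^T for a symmetric positive definite Gram matrix G. *)
Definition ip {R : realType} {n : nat} (G : 'M[R]_n) (u v : 'rV[R]_n) : R :=
  (u *m G *m v^T) 0 0.

Definition spd {R : realType} {n : nat} (G : 'M[R]_n) : Prop :=
  G^T = G /\ forall v : 'rV[R]_n, v != 0 -> 0 < ip G v v.

Definition hnorm {R : realType} {n : nat} (G : 'M[R]_n) (v : 'rV[R]_n) : R :=
  Num.sqrt (ip G v v).

Definition is_bilinear {R : realType} {n1 n2 : nat}
  (B : 'rV[R]_n1 -> 'rV[R]_n2 -> R) : Prop :=
  (forall (c : R) u1 u2 v, B (c *: u1 + u2) v = c * B u1 v + B u2 v) /\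
  (forall (c : R) u v1 v2, B u (c *: v1 + v2) = c * B u v1 + B u v2).

Definition is_linfun {R : realType} {n : nat} (f : 'rV[R]_n -> R) : Prop :=
  forall (c : R) u v, f (c *: u + v) = c * f u + f v.

Definition contset {R : realType} {n1 n2 : nat} (G1 : 'M[R]_n1) (G2 : 'M[R]_n2)
  (B : 'rV[R]_n1 -> 'rV[R]_n2 -> R) : set R :=
  [set r | exists u v, u != 0 /\ v != 0 /\ r = B u v / (hnorm G1 u * hnorm G2 v)].

Definition contconst {R : realType} {n1 n2 : nat} (G1 : 'M[R]_n1) (G2 : 'M[R]_n2)
  (B : 'rV[R]_n1 -> 'rV[R]_n2 -> R) : R := sup (contset G1 G2 B).

Definition coerconst {R : realType} {n : nat} (G : 'M[R]_n)
  (A : 'rV[R]_n -> 'rV[R]_n -> R) : R :=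
  inf [set r | exists v, v != 0 /\ r = A v v / (hnorm G v ^+ 2)].

Definition infsupconst {R : realType} {nx ny : nat} (GX : 'M[R]_nx) (GY : 'M[R]_ny)
  (b : 'rV[R]_nx -> 'rV[R]_ny -> R) : R :=
  inf [set r | exists q, q != 0 /\
       r = sup [set s | exists v, v != 0 /\ s = b v q / (hnorm GY q * hnorm GX v)]].

Definition dualnorm {R : realType} {n : nat} (G : 'M[R]_n) (r : 'rV[R]_n -> R) : R :=
  sup [set s | exists v, v != 0 /\ s = r v / hnorm G v].

(* The error [e^j = u^j - u_N^j], together with the pressure error, satisfies the
   truth equations with right-hand sides [r^{1,j}] and [r^{2,j} = b(e^j, .)].  By the
   inf-sup condition there is [w] with [b(w, .) = b(e^j, .)] and
   [beta |w| <= |r^{2,j}|_{Y'}]; testing the first error equation with [e^j - w]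
   eliminates the pressure.  Symmetry and positivity of [m] give
   [m(e^j,e^j) - m(e^{j-1},e^{j-1}) <= 2 m(e^j - e^{j-1}, e^j - w) + m(w,w)], and
   continuity, coercivity and Young's inequality bound this energy increment plus
   [dt a(e^j,e^j)] by [dt] times the [j]-th summand of the estimator.  Summing over
   [j] telescopes, since [e^0 = 0]. *)

From HB Require Import structures.
From mathcomp Require Import all_boot all_order all_algebra.
From mathcomp Require Import all_classical all_reals.
From mathcomp Require Import ring lra.
Import Order.TTheory GRing.Theory Num.Theory.
Local Open Scope ring_scope.
Local Open Scope classical_set_scope.
Set Implicit Arguments. Unset Strict Implicit.

Section BilinearForm.
Variables (R : realType) (n1 n2 : nat) (B : 'rV[R]_n1 -> 'rV[R]_n2 -> R).
Hypothesis hB : is_bilinear B.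

Lemma bilDl u1 u2 v : B (u1 + u2) v = B u1 v + B u2 v.
Proof. by have := hB.1 1 u1 u2 v; rewrite scale1r mul1r. Qed.

Lemma bilDr u v1 v2 : B u (v1 + v2) = B u v1 + B u v2.
Proof. by have := hB.2 1 u v1 v2; rewrite scale1r mul1r. Qed.

Lemma bil0l v : B 0 v = 0.
Proof. by have := bilDl 0 0 v; rewrite addr0; lra. Qed.

Lemma bil0r u : B u 0 = 0.
Proof. by have := bilDr u 0 0; rewrite addr0; lra. Qed.

Lemma bilZl c u v : B (c *: u) v = c * B u v.
Proof. by have := hB.1 c u 0 v; rewrite addr0 bil0l addr0. Qed.

Lemma bilZr c u v : B u (c *: v) = c * B u v.
Proof. by have := hB.2 c u v 0; rewrite addr0 bil0r addr0. Qed.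

Lemma bilNl u v : B (- u) v = - B u v.
Proof. by rewrite -scaleN1r bilZl mulN1r. Qed.

Lemma bilNr u v : B u (- v) = - B u v.
Proof. by rewrite -scaleN1r bilZr mulN1r. Qed.

Lemma bilBl u1 u2 v : B (u1 - u2) v = B u1 v - B u2 v.
Proof. by rewrite bilDl bilNl. Qed.

Lemma bilBr u v1 v2 : B u (v1 - v2) = B u v1 - B u v2.
Proof. by rewrite bilDr bilNr. Qed.

End BilinearForm.

Section SymmetricPositiveForm.
Variables (R : realType) (n : nat) (B : 'rV[R]_n -> 'rV[R]_n -> R).
Hypotheses (hB : is_bilinear B) (hBC : forall u v, B u v = B v u)
  (hB_pos : forall v, v != 0 -> 0 < B v v).

Lemma form_sqr_ge0 v : 0 <= B v v.
Proof.
have [->|nv] := eqVneq v 0; first by rewrite (bil0l hB).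
exact/ltW/hB_pos.
Qed.

Lemma form_cauchy_schwarz u v : B u v ^+ 2 <= B u u * B v v.
Proof.
have [->|nv] := eqVneq v 0; first by rewrite !(bil0r hB) expr0n mulr0.
set x := B v v; set y := B u v.
have x_gt0 : 0 < x by apply: hB_pos.
have := form_sqr_ge0 (x *: u - y *: v).
rewrite !(bilBl hB, bilBr hB, bilZl hB, bilZr hB) (hBC v u) -/x -/y => h0.
have : 0 <= x * (x * B u u - y ^+ 2) by lra.
by rewrite pmulr_rge0 // subr_ge0 mulrC.
Qed.

Lemma form_increment_le E E' W :
  B E E - B E' E' <= 2 * B (E - E') (E - W) + B W W.
Proof.
have := form_sqr_ge0 (E - E' - W).
by rewrite !(bilBl hB, bilBr hB) (hBC E' E) (hBC W E) (hBC W E'); lra.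
Qed.

End SymmetricPositiveForm.

Lemma ip_bilinear (R : realType) n (G : 'M[R]_n) : is_bilinear (ip G).
Proof.
split=> c u v w; rewrite /ip; first by rewrite !mulmxDl -!scalemxAl !mxE.
by rewrite linearD linearZ /= mulmxDr -scalemxAr !mxE.
Qed.

Lemma ipC (R : realType) n (G : 'M[R]_n) : G^T = G -> forall u v, ip G u v = ip G v u.
Proof.
move=> GT u v; rewrite /ip.
transitivity (((u *m G *m v^T)^T) 0 0); first by rewrite [RHS]mxE.
by rewrite !trmx_mul trmxK GT mulmxA.
Qed.

Section HilbertNorm.
Variables (R : realType) (n : nat) (G : 'M[R]_n).
Hypothesis hG : spd G.

Lemma hnorm_ge0 v : 0 <= hnorm G v.
Proof. exact: sqrtr_ge0. Qed.

Lemma hnorm_sqr v : hnorm G v ^+ 2 = ip G v v.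
Proof. by rewrite /hnorm sqr_sqrtr // (form_sqr_ge0 (ip_bilinear G) hG.2). Qed.

Lemma hnorm_gt0 v : v != 0 -> 0 < hnorm G v.
Proof. by move=> nv; rewrite /hnorm sqrtr_gt0; apply: hG.2. Qed.

Lemma hnorm0 : hnorm G 0 = 0.
Proof. by rewrite /hnorm (bil0l (ip_bilinear G)) sqrtr0. Qed.

Lemma hnorm_opp v : hnorm G (- v) = hnorm G v.
Proof. by rewrite /hnorm (bilNl (ip_bilinear G)) (bilNr (ip_bilinear G)) opprK. Qed.

Lemma ip_le_hnorm u v : ip G u v <= hnorm G u * hnorm G v.
Proof.
have ip_ge0 := form_sqr_ge0 (ip_bilinear G) hG.2.
have cs := form_cauchy_schwarz (ip_bilinear G) (ipC hG.1) hG.2 u v.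
rewrite /hnorm -sqrtrM // (le_trans (ler_norm _)) // -sqrtr_sqr.
exact: ler_wsqrtr.
Qed.

Lemma spd_unitmx : G \in unitmx.
Proof.
rewrite -row_free_unit; apply: inj_row_free => v vG0.
apply/eqP/negPn/negP => nv.
by have := hG.2 v nv; rewrite /ip vG0 mul0mx mxE ltxx.
Qed.

End HilbertNorm.

Section LinearFunctional.
Variables (R : realType) (n : nat) (l : 'rV[R]_n -> R).
Hypothesis hl : is_linfun l.

Lemma linfun0 : l 0 = 0.
Proof. by have := hl 1 0 0; rewrite scaler0 addr0 mul1r; lra. Qed.

Lemma linfunN v : l (- v) = - l v.
Proof. by have := hl (-1) v 0; rewrite addr0 scaleN1r linfun0 addr0 mulN1r. Qed.

Lemma linfun_mxE v : l v = (v *m \col_i l 'e_i) 0 0.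
Proof.
rewrite mxE {1}(row_sum_delta v).
elim/big_rec2: _ => [|i y1 y2 _ <-]; first by rewrite linfun0.
by rewrite hl mxE.
Qed.

End LinearFunctional.

Lemma bilinear_mxE (R : realType) n1 n2 (B : 'rV[R]_n1 -> 'rV[R]_n2 -> R) :
  is_bilinear B -> forall u v, B u v = (u *m (\matrix_(i, j) B 'e_i 'e_j) *m v^T) 0 0.
Proof.
move=> hB u v.
have hBv : is_linfun (B ^~ v) by move=> c x y; apply: hB.1.
rewrite (linfun_mxE hBv) -mulmxA.
congr ((u *m _) 0 0); apply/matrixP => i j; rewrite !mxE (ord1 j).
have hBi : is_linfun (B 'e_i) by move=> c x y; apply: hB.2.
by rewrite (linfun_mxE hBi) !mxE; apply: eq_bigr => k _; rewrite !mxE mulrC.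
Qed.

Lemma riesz_representation (R : realType) n (G : 'M[R]_n) (l : 'rV[R]_n -> R) :
  spd G -> is_linfun l -> exists z, forall v, l v = ip G v z.
Proof.
move=> hG hl; exists ((invmx G *m \col_i l 'e_i)^T) => v.
by rewrite /ip trmxK mulmxA mulmxK ?spd_unitmx // -linfun_mxE.
Qed.

(* [sup] of an empty set is [0], hence the side condition [0 <= c]. *)
Lemma sup_le_ub_ge0 (R : realType) (S : set R) c :
  (forall x, S x -> x <= c) -> 0 <= c -> sup S <= c.
Proof.
move=> Sc c_ge0; have [neS|noS] := pselect (S !=set0); first exact: ge_sup.
by rewrite sup_out // => -[].
Qed.

(* [inf] of a set with no lower bound is [0], which [0 < inf S] excludes. *)
Lemma inf_le_of_gt0 (R : realType) (S : set R) x : 0 < inf S -> S x -> inf S <= x.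
Proof.
have [[_ lbS] _ Sx|noinf] := pselect (has_inf S); first exact: ge_inf lbS x Sx.
by rewrite inf_out // ltxx.
Qed.

Section DualNorm.
Variables (R : realType) (n : nat) (G : 'M[R]_n) (l : 'rV[R]_n -> R).
Hypotheses (hG : spd G) (hl : is_linfun l).

Lemma dualnorm_has_ubound :
  has_ubound [set s | exists v, v != 0 /\ s = l v / hnorm G v].
Proof.
have [z lz] := riesz_representation hG hl.
exists (hnorm G z) => s [v [nv ->]].
by rewrite ler_pdivrMr ?hnorm_gt0 // lz mulrC ip_le_hnorm.
Qed.

Lemma dualnorm_ub v : l v <= dualnorm G l * hnorm G v.
Proof.
have [->|nv] := eqVneq v 0; first by rewrite linfun0 // hnorm0 // mulr0.
rewrite -ler_pdivrMr ?hnorm_gt0 //.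
by apply: ub_le_sup; [exact: dualnorm_has_ubound | exists v].
Qed.

Lemma dualnorm_ge0 : 0 <= dualnorm G l.
Proof.
have [[v nv]|nov] := pselect (exists v : 'rV[R]_n, v != 0).
  have := dualnorm_ub v; have := dualnorm_ub (- v).
  rewrite linfunN // hnorm_opp // => lNv lv.
  have hv := hnorm_gt0 hG nv.
  by rewrite -(pmulr_lge0 _ hv); lra.
rewrite /dualnorm sup_out // => -[[s [v [nv _]]] _].
by apply: nov; exists v.
Qed.

End DualNorm.

Lemma contconst_bound (R : realType) n (G : 'M[R]_n) (B : 'rV[R]_n -> 'rV[R]_n -> R) c :
  spd G -> is_bilinear B -> has_ubound (contset G G B) -> contconst G G B <= c ->
  forall u v, B u v <= c * hnorm G u * hnorm G v.
Proof.
move=> hG hB ubB Bc u v.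
have [->|nu] := eqVneq u 0; first by rewrite (bil0l hB) hnorm0 // mulr0 mul0r.
have [->|nv] := eqVneq v 0; first by rewrite (bil0r hB) hnorm0 // mulr0.
have hu := hnorm_gt0 hG nu; have hv := hnorm_gt0 hG nv.
rewrite -mulrA -ler_pdivrMr ?mulr_gt0 // (le_trans _ Bc) //.
by apply: ub_le_sup => //; exists u, v.
Qed.

Lemma coerconst_bound (R : realType) n (G : 'M[R]_n) (A : 'rV[R]_n -> 'rV[R]_n -> R) c :
  spd G -> is_bilinear A -> 0 < coerconst G A -> c <= coerconst G A ->
  forall v, c * hnorm G v ^+ 2 <= A v v.
Proof.
move=> hG hA A_gt0 cA v.
have [->|nv] := eqVneq v 0; first by rewrite (bil0l hA) hnorm0 // expr0n mulr0.
have hv := hnorm_gt0 hG nv.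
rewrite -ler_pdivlMr ?exprn_gt0 // (le_trans cA) //.
by apply: inf_le_of_gt0 => //; exists v.
Qed.

Section InfSupLifting.
Variables (R : realType) (nx ny : nat) (GX : 'M[R]_nx) (GY : 'M[R]_ny).
Variables (b : 'rV[R]_nx -> 'rV[R]_ny -> R) (be : R).
Hypotheses (hGX : spd GX) (hGY : spd GY) (hb : is_bilinear b) (be_gt0 : 0 < be)
  (infsup_gt0 : 0 < infsupconst GX GY b) (be_le : be <= infsupconst GX GY b).

Lemma bilinear_riesz_mx : exists T : 'M[R]_(ny, nx), forall q v, b v q = ip GX v (q *m T).
Proof.
exists ((invmx GX *m \matrix_(i, j) b 'e_i 'e_j)^T) => q v.
by rewrite (bilinear_mxE hb) /ip trmx_mul trmxK !mulmxA mulmxK ?spd_unitmx.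
Qed.

Lemma infsup_bound q z : (forall v, b v q = ip GX v z) -> be * hnorm GY q <= hnorm GX z.
Proof.
move=> bz.
have [->|nq] := eqVneq q 0; first by rewrite hnorm0 // mulr0 hnorm_ge0.
have hq := hnorm_gt0 hGY nq.
rewrite -ler_pdivlMr //; apply: (le_trans be_le).
apply: le_trans (inf_le_of_gt0 infsup_gt0 _) _; first by exists q.
apply: sup_le_ub_ge0 => [s [v [nv ->]]|]; last by rewrite divr_ge0 ?hnorm_ge0.
have hv := hnorm_gt0 hGX nv.
rewrite bz ler_pdivrMr ?mulr_gt0 //.
have -> : hnorm GX z / hnorm GY q * (hnorm GY q * hnorm GX v)
          = hnorm GX v * hnorm GX z by field; rewrite gt_eqF.
exact: ip_le_hnorm.
Qed.

(* Writing [b v q = <v, q T>], where [q T] is the supremizer of [q], the inf-sup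
   condition makes the Gram matrix [T GX T^T] invertible; [w] is the supremizer
   of the [q] for which [b (q T) = b e]. *)
Lemma infsup_lift e :
  exists w, (forall q, b w q = b e q) /\ hnorm GX w <= dualnorm GY (b e) / be.
Proof.
have [T bT] := bilinear_riesz_mx.
pose C := T *m GX *m T^T.
have ipT q q' : ip GX (q *m T) (q' *m T) = (q *m C *m q'^T) 0 0.
  by rewrite /ip trmx_mul !mulmxA.
have C_unit : C \in unitmx.
  rewrite -row_free_unit; apply: inj_row_free => q qC0.
  have qT0 : q *m T = 0.
    apply/eqP/negPn/negP => nqT.
    by have := hGX.2 _ nqT; rewrite ipT qC0 mul0mx mxE ltxx.
  have := infsup_bound (bT q); rewrite qT0 hnorm0 //.
  by apply: contraTeq => nq; rewrite -ltNge mulr_gt0 ?hnorm_gt0.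
pose qe := e *m GX *m T^T *m invmx C.
have bw q : b (qe *m T) q = b e q.
  by rewrite !bT ipT /qe mulmxKV // /ip trmx_mul !mulmxA.
exists (qe *m T); split => //.
have be_lin : is_linfun (b e) by move=> c x y; apply: hb.2.
have w_sqr : hnorm GX (qe *m T) ^+ 2 <= dualnorm GY (b e) * hnorm GY qe.
  by rewrite hnorm_sqr // -bT bw dualnorm_ub.
have qe_le := infsup_bound (bT qe).
have dn_ge0 := dualnorm_ge0 hGY be_lin.
rewrite ler_pdivlMr //.
have [W0|W_neq0] := eqVneq (hnorm GX (qe *m T)) 0; first by rewrite W0 mul0r.
have W_gt0 : 0 < hnorm GX (qe *m T) by rewrite lt_def W_neq0 hnorm_ge0.
rewrite -(ler_pM2l W_gt0).
have := ler_wpM2l (ltW be_gt0) w_sqr; have := ler_wpM2l dn_ge0 qe_le.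
rewrite expr2; nra.
Qed.

End InfSupLifting.

Lemma young_sqr_le (R : realFieldType) (c x h : R) :
  0 < c -> 2 * x * h - c * h ^+ 2 <= x ^+ 2 / c.
Proof.
move=> c_gt0.
have -> : x ^+ 2 / c = 2 * x * h - c * h ^+ 2 + (c * h - x) ^+ 2 / c.
  by field; rewrite gt_eqF.
by rewrite lerDl divr_ge0 ?sqr_ge0 ?ltW.
Qed.

Definition error_bound_summand (R : realFieldType) (dt al ga gm be d1 d2 : R) : R :=
  d1 ^+ 2 / al + 2 / be * (1 + ga / al) * d1 * d2
  + (gm / dt + ga ^+ 2 / al) * (d2 ^+ 2 / be ^+ 2).

Lemma error_bound_summandE (R : realFieldType) (dt al ga gm be d1 d2 : R) :
  0 < dt -> 0 < al -> 0 < be ->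
  dt * error_bound_summand dt al ga gm be d1 d2
  = dt * ((d1 + ga * (d2 / be)) ^+ 2 / al + 2 * d1 * (d2 / be)) + gm * (d2 / be) ^+ 2.
Proof. by move=> dt_gt0 al_gt0 be_gt0; rewrite /error_bound_summand; field; rewrite !gt_eqF. Qed.

Section ErrorStep.
Variables (R : realType) (nx ny : nat) (GX : 'M[R]_nx) (GY : 'M[R]_ny).
Variables (m a : 'rV[R]_nx -> 'rV[R]_nx -> R) (b : 'rV[R]_nx -> 'rV[R]_ny -> R).
Variables (dt al ga gm be : R).
Hypotheses (hGX : spd GX) (hm : is_bilinear m) (ha : is_bilinear a) (hb : is_bilinear b).
Hypotheses (hmC : forall v w, m v w = m w v) (hm_pos : forall v, v != 0 -> 0 < m v v).
Hypotheses (dt_gt0 : 0 < dt) (al_gt0 : 0 < al) (be_gt0 : 0 < be).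
Hypotheses (ga_ge0 : 0 <= ga) (gm_ge0 : 0 <= gm).
Hypotheses (m_cont : forall u v, m u v <= gm * hnorm GX u * hnorm GX v)
  (a_cont : forall u v, a u v <= ga * hnorm GX u * hnorm GX v)
  (a_coer : forall v, al * hnorm GX v ^+ 2 <= a v v)
  (b_lift : forall e, exists w,
     (forall q, b w q = b e q) /\ hnorm GX w <= dualnorm GY (b e) / be).

(* Testing the error equation with [E - W], where [b W = b E], removes the
   pressure error [P]. *)
Lemma error_step (r : 'rV[R]_nx -> R) (E E' : 'rV[R]_nx) (P : 'rV[R]_ny) :
  is_linfun r ->
  (forall v, r v = dt^-1 * m (E - E') v + a E v + b v P) ->
  m E E - m E' E' + dt * a E E
    <= dt * error_bound_summand dt al ga gm be (dualnorm GX r) (dualnorm GY (b E)).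
Proof.
move=> r_lin rE.
have [W [bW W_le]] := b_lift E.
have rEW : r E + r (- W) = dt^-1 * m (E - E') (E - W) + a E E - a E W.
  have := r_lin 1 E (- W); rewrite scale1r mul1r => <-.
  by rewrite rE (bilBl hb) bW (bilBr ha); ring.
have rE_le := dualnorm_ub hGX r_lin E.
have rW_le := dualnorm_ub hGX r_lin (- W); rewrite hnorm_opp // in rW_le.
have aEW_le := a_cont E W.
have mWW_le := m_cont W W.
have aEE_ge := a_coer E.
have incr := form_increment_le hm hmC hm_pos E E' W.
have d1_ge0 := dualnorm_ge0 hGX r_lin.
rewrite error_bound_summandE //.
move: W_le rEW rE_le rW_le aEW_le mWW_le aEE_ge incr d1_ge0.
set hE := hnorm GX E; set hW := hnorm GX W; set d1 := dualnorm GX r.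
set Y := dualnorm GY (b E) / be.
move=> W_le rEW rE_le rW_le aEW_le mWW_le aEE_ge incr d1_ge0.
have hW_ge0 : 0 <= hW := hnorm_ge0 GX W.
have Y_ge0 : 0 <= Y := le_trans hW_ge0 W_le.
have young := young_sqr_le (d1 + ga * hW) hE al_gt0.
have sum_le : d1 + ga * hW <= d1 + ga * Y by rewrite lerD2l ler_wpM2l.
have sum_ge0 : 0 <= d1 + ga * hW by rewrite addr_ge0 // mulr_ge0.
have Y_mono : dt * ((d1 + ga * hW) ^+ 2 / al + 2 * d1 * hW) + gm * hW ^+ 2
              <= dt * ((d1 + ga * Y) ^+ 2 / al + 2 * d1 * Y) + gm * Y ^+ 2.
  apply: lerD; last by apply: ler_wpM2l; rewrite // ler_sqr ?nnegrE.
  apply: ler_wpM2l; first exact: ltW.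
  apply: lerD; last by rewrite -!mulrA ler_wpM2l // ler_wpM2l.
  by rewrite ler_pM2r ?invr_gt0 // ler_sqr ?nnegrE // (le_trans sum_ge0).
apply: le_trans Y_mono.
have mEW : m (E - E') (E - W) = dt * (r E + r (- W) - a E E + a E W).
  by rewrite rEW; field; rewrite gt_eqF.
have dt_ge0 := ltW dt_gt0.
have := ler_wpM2l dt_ge0 aEE_ge; have := ler_wpM2l dt_ge0 aEW_le.
have := ler_wpM2l dt_ge0 rE_le; have := ler_wpM2l dt_ge0 rW_le.
have := ler_wpM2l dt_ge0 young.
rewrite mEW in incr; lra.
Qed.

End ErrorStep.

Lemma sum_increments_le (R : realDomainType) (x y z : nat -> R) k :
  x 0%N = 0 -> (forall j, (1 <= j <= k)%N -> x j - x j.-1 + y j <= z j) ->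
  x k + \sum_(1 <= j < k.+1) y j <= \sum_(1 <= j < k.+1) z j.
Proof.
move=> x0; elim: k => [_|k IH incr]; first by rewrite x0 !big_geq // addr0.
rewrite !(big_nat_recr k.+1) //=.
have := incr k.+1; rewrite leqnn => /(_ isT) /=.
have /IH : forall j, (1 <= j <= k)%N -> x j - x j.-1 + y j <= z j.
  by move=> j /andP[j_ge1 j_le]; apply: incr; rewrite j_ge1 leqW.
lra.
Qed.

Unset Implicit Arguments.

Theorem proposition2p1
  (R : realType) (n nx ny : nat) (D : set 'rV[R]_n)
  (GX : 'M[R]_nx) (GY : 'M[R]_ny)
  (m a : 'rV[R]_n -> 'rV[R]_nx -> 'rV[R]_nx -> R)
  (b : 'rV[R]_n -> 'rV[R]_nx -> 'rV[R]_ny -> R)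
  (K : nat) (dt : R)
  (f : 'rV[R]_n -> nat -> 'rV[R]_nx -> R)
  (g : 'rV[R]_n -> nat -> 'rV[R]_ny -> R)
  (u : 'rV[R]_n -> nat -> 'rV[R]_nx) (p : 'rV[R]_n -> nat -> 'rV[R]_ny)
  (Nmax : nat) (XN : nat -> {vspace 'rV[R]_nx}) (YN : nat -> {vspace 'rV[R]_ny})
  (uN : nat -> 'rV[R]_n -> nat -> 'rV[R]_nx)
  (pN : nat -> 'rV[R]_n -> nat -> 'rV[R]_ny)
  (mu : 'rV[R]_n) (N k : nat)
  (alphaLB gammaaUB betaLB gammamUB : R) :
  spd GX -> spd GY ->
  (forall mu, D mu ->
     is_bilinear (m mu) /\ is_bilinear (a mu) /\ is_bilinear (b mu) /\
     (forall v w, m mu v w = m mu w v) /\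
     (forall v, v != 0 -> 0 < m mu v v) /\
     has_ubound (contset GX GX (m mu)) /\ has_ubound (contset GX GX (a mu)) /\
     0 < coerconst GX (a mu) /\
     0 < infsupconst GX GY (b mu)) ->
  0 < dt ->
  (forall mu, D mu -> forall j, (1 <= j <= K)%N ->
     is_linfun (f mu j) /\ is_linfun (g mu j)) ->
  (forall mu, D mu -> u mu 0%N = 0) ->
  (forall mu, D mu -> forall j, (1 <= j <= K)%N ->
     (forall v, dt^-1 * m mu (u mu j - u mu j.-1) v + a mu (u mu j) v
                + b mu v (p mu j) = f mu j v) /\
     (forall q, b mu (u mu j) q = g mu j q)) ->
  (forall N', (1 <= N' <= Nmax)%N -> forall mu, D mu ->
     uN N' mu 0%N = 0 /\
     forall j, (1 <= j <= K)%N ->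
       [/\ uN N' mu j \in XN N', pN N' mu j \in YN N',
           (forall v, v \in XN N' ->
              dt^-1 * m mu (uN N' mu j - uN N' mu j.-1) v + a mu (uN N' mu j) v
              + b mu v (pN N' mu j) = f mu j v) &
           (forall q, q \in YN N' -> b mu (uN N' mu j) q = g mu j q)]) ->
  D mu -> (1 <= N <= Nmax)%N -> (1 <= k <= K)%N ->
  0 < alphaLB -> 0 < gammaaUB -> 0 < betaLB -> 0 < gammamUB ->
  alphaLB <= coerconst GX (a mu) ->
  contconst GX GX (a mu) <= gammaaUB ->
  betaLB <= infsupconst GX GY (b mu) ->
  contconst GX GX (m mu) <= gammamUB ->
  let r1 := fun j (v : 'rV[R]_nx) =>
    f mu j v - dt^-1 * m mu (uN N mu j - uN N mu j.-1) v
    - a mu (uN N mu j) v - b mu v (pN N mu j) in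
  let r2 := fun j (q : 'rV[R]_ny) => g mu j q - b mu (uN N mu j) q in
  let e := fun j => u mu j - uN N mu j in
  let Delta := Num.sqrt (dt * \sum_(1 <= j < k.+1)
      (dualnorm GX (r1 j) ^+ 2 / alphaLB
       + 2 / betaLB * (1 + gammaaUB / alphaLB)
           * dualnorm GX (r1 j) * dualnorm GY (r2 j)
       + (gammamUB / dt + gammaaUB ^+ 2 / alphaLB)
           * (dualnorm GY (r2 j) ^+ 2 / betaLB ^+ 2))) in
  Num.sqrt (m mu (e k) (e k) + dt * \sum_(1 <= j < k.+1) a mu (e j) (e j))
    <= Delta.
Proof.
move=> hGX hGY forms dt_gt0 data u0 truth reduced Dmu hN /andP[_ k_le] al_gt0 ga_gt0
  be_gt0 gm_gt0 al_le ga_ge be_le gm_ge.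
pose e j := u mu j - uN N mu j.
pose r1 j v := f mu j v - dt^-1 * m mu (uN N mu j - uN N mu j.-1) v
  - a mu (uN N mu j) v - b mu v (pN N mu j).
pose r2 j q := g mu j q - b mu (uN N mu j) q.
change (Num.sqrt (m mu (e k) (e k) + dt * \sum_(1 <= j < k.+1) a mu (e j) (e j))
  <= Num.sqrt (dt * \sum_(1 <= j < k.+1) error_bound_summand dt alphaLB gammaaUB
       gammamUB betaLB (dualnorm GX (r1 j)) (dualnorm GY (r2 j)))).
have [hm [ha [hb [hmC [hm_pos [m_ub [a_ub [a_coer infsup_gt0]]]]]]]] := forms mu Dmu.
have [uN0 _] := reduced N hN mu Dmu.
apply: ler_wsqrtr; rewrite !mulr_sumr.
apply: (sum_increments_le (x := fun j => m mu (e j) (e j))) => [|j /andP[j_ge1 j_le]].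
  by rewrite /e u0 // uN0 subr0 (bil0l hm).
have jK : (1 <= j <= K)%N by rewrite j_ge1 (leq_trans j_le k_le).
have [f_lin g_lin] := data mu Dmu j jK.
have [truth_eq truth_div] := truth mu Dmu j jK.
have -> : r2 j = b mu (e j).
  by apply/funext => q; rewrite /r2 /e (bilBl hb) truth_div.
apply: (error_step hGX hm ha hb hmC hm_pos dt_gt0 al_gt0 be_gt0 (ltW ga_gt0) (ltW gm_gt0)
  (contconst_bound hGX hm m_ub gm_ge) (contconst_bound hGX ha a_ub ga_ge)
  (coerconst_bound hGX ha a_coer al_le) (infsup_lift hGX hGY hb be_gt0 infsup_gt0 be_le)
  (P := p mu j - pN N mu j)).
- by move=> c v w; rewrite /r1 f_lin hm.2 ha.2 hb.1; ring.
- move=> v; rewrite /r1 -truth_eq /e.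
  by rewrite !(bilBl hm, bilBl ha, bilBr hb); ring.
Qed.
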